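(* Let $\omega\in(0,1)$ and let $\alpha=(\alpha_m)$, $\beta=(\beta_m)$ be non-negative non-increasing null sequences with $\alpha_1,\beta_1\le1$. Then there is $C>0$ with $\alpha_m\le C\beta_m$ for all $m$ if and only if there exists a positive integer $r$ such that $\widetilde K^{(\omega)}_n(\alpha)\le\widetilde K^{(\omega)}_{n+r}(\beta)$ for every $n\in\mathbb N\cup\{0\}$.
   Context: For a non-negative non-increasing null sequence $\gamma$ and $n\ge0$: $K^{(\omega)}_n(\gamma)=|\{m:\omega^{n+1}<\gamma_m\le\omega^n\}|$ and $\widetilde K^{(\omega)}_n(\gamma)=\sum_{i=0}^nK^{(\omega)}_i(\gamma)$. *)

From HB Require Import structures.
From mathcomp Require Import all_boot all_order all_algebra.
From mathcomp Require Import all_classical all_reals all_analysis.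
From mathcomp Require Import finmap.
Set Implicit Arguments. Unset Strict Implicit. Unset Printing Implicit Defensive.
Import Order.TTheory GRing.Theory Num.Theory numFieldNormedType.Exports.
Local Open Scope ring_scope.
Local Open Scope classical_set_scope.
Local Open Scope fset_scope.

(* gamma is a non-negative, non-increasing null sequence (indexed from 0). *)
Definition nonneg_noninc_null (R : realType) (gamma : nat -> R) : Prop :=
  (forall m, 0 <= gamma m) /\
  (forall m n, (m <= n)%N -> gamma n <= gamma m) /\
  (gamma @ \oo --> 0).

(* K^(omega)_n(gamma) = |{m : omega^(n+1) < gamma_m <= omega^n}|
   (the set is finite for a null sequence, so fset_set is its true finite set) *)
Definition Kom (R : realType) (omega : R) (n : nat) (gamma : nat -> R) : nat :=
  #|` fset_set [set m : nat | omega ^+ n.+1 < gamma m <= omega ^+ n] |.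

Definition Ktil (R : realType) (omega : R) (n : nat) (gamma : nat -> R) : nat :=
  (\sum_(0 <= i < n.+1) Kom omega i gamma)%N.

From HB Require Import structures.
From mathcomp Require Import all_boot all_order all_algebra.
From mathcomp Require Import all_classical all_reals all_analysis.
From mathcomp Require Import finmap.
Set Implicit Arguments. Unset Strict Implicit. Unset Printing Implicit Defensive.
Import Order.TTheory GRing.Theory Num.Theory.
Local Open Scope ring_scope.
Local Open Scope classical_set_scope.

(* Ktil_n(gamma) counts the indices m with gamma_m > w^(n+1), and for a
   nonincreasing gamma these indices form the initial segment [0, Ktil_n(gamma)).
   Hence Ktil_n(alpha) <= Ktil_(n+r)(beta) for all n says exactly that
   alpha_m > w^(n+1) forces beta_m > w^(n+r+1).  Bracketing alpha_m between two
   consecutive powers of w turns this into alpha_m <= w^-(r+1) beta_m; conversely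
   alpha <= C beta yields it as soon as w^r <= 1/C. *)

Section Superlevel.
Variable R : realType.

Definition superlevel (g : nat -> R) (t : R) : set nat := [set m | t < g m].

Lemma finite_superlevel g t : g @ \oo --> 0 -> 0 < t -> finite_set (superlevel g t).
Proof.
move=> g0 t0; have [N _ gN] := cvgr_lt 0 g0 t t0.
apply: (@sub_finite_set _ _ `I_N); last exact: finite_II.
move=> m /= tm; rewrite ltnNge; apply/negP => /gN /=.
by rewrite ltNge (ltW tm).
Qed.

Lemma card_superlevel_split g s t : s <= t -> finite_set (superlevel g s) ->
  #|` fset_set (superlevel g s)| =
  (#|` fset_set (superlevel g t)| + #|` fset_set [set m | (s < g m <= t)%R]|)%N.
Proof.
move=> st fs; set A := superlevel g t; set B := [set m | s < g m <= t].
have fA : finite_set A by apply: sub_finite_set fs => m /=; apply: le_lt_trans.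
have fB : finite_set B by apply: sub_finite_set fs => m /= /andP[].
have -> : superlevel g s = A `|` B.
  apply/seteqP; split => m /=; last by case=> [/(le_lt_trans st)|/andP[]].
  by move=> sm; case: (leP (g m) t) => tm; [right; apply/andP | left].
have AB0 : A `&` B = set0.
  by apply/seteqP; split => m //= [tm /andP[_]]; rewrite leNgt tm.
by rewrite -cardfsUI -fset_setI // AB0 fset_set0 cardfs0 addn0 fset_setU.
Qed.

Section Nonincreasing.
Variable g : nat -> R.
Hypothesis g_noninc : forall m n, (m <= n)%N -> g n <= g m.

Lemma superlevel_card t m : finite_set (superlevel g t) ->
  superlevel g t m <-> (m < #|` fset_set (superlevel g t)|)%N.
Proof.
move=> fin; split => [tm | ].
  apply: leq_card_fset_set => //; apply: subset_card_le => k /= km.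
  exact: (lt_le_trans (tm : t < g m) (g_noninc (km : (k <= m)%N))).
apply: contraPP => tm; apply/negP; rewrite -leqNgt.
apply: geq_card_fset_set; apply: subset_card_le => k /= tk.
rewrite ltnNge; apply/negP => /g_noninc gmk.
by apply: tm; apply: (lt_le_trans (tk : t < g k) gmk).
Qed.

End Nonincreasing.

Lemma superlevel_sub_of_card_le g h s t :
  (forall m n, (m <= n)%N -> g n <= g m) -> (forall m n, (m <= n)%N -> h n <= h m) ->
  finite_set (superlevel g s) -> finite_set (superlevel h t) ->
  (#|` fset_set (superlevel g s)| <= #|` fset_set (superlevel h t)|)%N ->
  superlevel g s `<=` superlevel h t.
Proof.
move=> g_noninc h_noninc fg fh le m /(superlevel_card g_noninc m fg) gm.
exact/(superlevel_card h_noninc m fh)/(leq_trans gm le).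
Qed.

End Superlevel.

Section Ktil.
Variables (R : realType) (w : R).
Hypothesis w01 : 0 < w < 1.

Lemma exists_expr_lt t : 0 < t -> exists N, forall k, (N <= k)%N -> w ^+ k < t.
Proof.
have /andP[w0 w1] := w01; move=> t0.
have w_cvg : GRing.exp w @ \oo --> 0 by apply: cvg_expr; rewrite gtr0_norm.
by have [N _ wN] := cvgr_lt 0 w_cvg t t0; exists N.
Qed.

Lemma exists_expr_bracket a : 0 < a <= 1 -> exists n, w ^+ n.+1 < a <= w ^+ n.
Proof.
move=> /andP[a0 a1].
have ex : exists n, w ^+ n.+1 < a by have [N wN] := exists_expr_lt a0; exists N; apply: wN.
case: (ex_minnP ex) => n wn nmin; exists n; rewrite wn /=.
case: n wn nmin => [|n] _ nmin; first by rewrite expr0.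
by rewrite leNgt; apply/negP => /nmin; rewrite ltnn.
Qed.

Lemma Ktil_superlevel (g : nat -> R) n : g @ \oo --> 0 -> (forall m, g m <= 1) ->
  Ktil w n g = #|` fset_set (superlevel g (w ^+ n.+1))|.
Proof.
have /andP[w0 w1] := w01; move=> g0 g1.
have fin k : finite_set (superlevel g (w ^+ k)) by apply: finite_superlevel; rewrite ?exprn_gt0.
elim: n => [|n IH].
  rewrite /Ktil big_nat1 /Kom expr1 expr0; congr #|` fset_set _|.
  by apply/seteqP; split => m /=; rewrite g1 ?andbT.
rewrite /Ktil big_nat_recr //= -/(Ktil w n g) IH.
rewrite [RHS](card_superlevel_split (t := w ^+ n.+1)) ?fin //.
by rewrite exprS ler_piMl ?exprn_ge0 ?ltW.
Qed.

Section Comparison.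
Variables alpha beta : nat -> R.
Hypotheses (alpha_seq : nonneg_noninc_null alpha) (beta_seq : nonneg_noninc_null beta).
Hypotheses (alpha0_le1 : alpha 0%N <= 1) (beta0_le1 : beta 0%N <= 1).

Let Ktil_superlevelE g n : nonneg_noninc_null g -> g 0%N <= 1 ->
  Ktil w n g = #|` fset_set (superlevel g (w ^+ n.+1))|.
Proof.
move=> [_ [g_noninc g0]] g1; apply: Ktil_superlevel => // m.
exact: le_trans (g_noninc _ _ (leq0n m)) g1.
Qed.

Let fin_superlevel (g : nat -> R) :
  nonneg_noninc_null g -> forall k, finite_set (superlevel g (w ^+ k)).
Proof.
by move=> [_ [_ g0]] k; apply: finite_superlevel; rewrite // exprn_gt0 //; case/andP: w01.
Qed.

Lemma Ktil_shift_le_of_le_scaled C : 0 < C -> (forall m, alpha m <= C * beta m) ->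
  exists r, (0 < r)%N /\ forall n, (Ktil w n alpha <= Ktil w (n + r) beta)%N.
Proof.
have /andP[w0 _] := w01; move=> C0 le_scaled.
have [fa fb] := (fin_superlevel alpha_seq, fin_superlevel beta_seq).
have [N wN] : exists N, forall k, (N <= k)%N -> w ^+ k < C^-1.
  by apply: exists_expr_lt; rewrite invr_gt0.
exists N.+1; split => // n.
rewrite !Ktil_superlevelE //; apply: fsubset_leq_card.
rewrite -fset_set_sub // => m /= am.
have wNC : w ^+ N.+1 < C^-1 by apply: wN.
have : w ^+ n.+1 / C < beta m.
  by rewrite ltr_pdivrMr // mulrC; exact: lt_le_trans am (le_scaled m).
apply: le_lt_trans; rewrite -addSn exprD ler_wpM2l ?exprn_ge0 ?ltW //.
Qed.

Lemma le_scaled_of_Ktil_shift_le r :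
  (forall n, (Ktil w n alpha <= Ktil w (n + r) beta)%N) ->
  forall m, alpha m <= (w ^+ r.+1)^-1 * beta m.
Proof.
have /andP[w0 _] := w01; move=> Ktil_le m.
have [[a_ge0 [a_noninc _]] [b_ge0 [b_noninc _]]] := (alpha_seq, beta_seq).
have [fa fb] := (fin_superlevel alpha_seq, fin_superlevel beta_seq).
have wr0 : 0 < w ^+ r.+1 by rewrite exprn_gt0.
have [am0|am0] := eqVneq (alpha m) 0.
  by rewrite am0 mulr_ge0 // invr_ge0 ltW.
have [n /andP[wn an]] : exists n, w ^+ n.+1 < alpha m <= w ^+ n.
  apply: exists_expr_bracket; rewrite lt0r am0 a_ge0 /=.
  exact: le_trans (a_noninc _ _ (leq0n m)) alpha0_le1.
have bm : w ^+ (n + r).+1 < beta m.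
  apply: (superlevel_sub_of_card_le a_noninc b_noninc (fa _) (fb _) _ wn).
  by rewrite -!Ktil_superlevelE.
rewrite ler_pdivlMl //; apply: le_trans (ltW bm).
by rewrite -addnS exprD mulrC ler_wpM2r // exprn_ge0 // ltW.
Qed.

End Comparison.
End Ktil.

Theorem lemma2p6 (R : realType) (omega : R) (alpha beta : nat -> R) :
  0 < omega < 1 ->
  nonneg_noninc_null alpha -> nonneg_noninc_null beta ->
  alpha 0%N <= 1 -> beta 0%N <= 1 ->
  (exists C : R, 0 < C /\ forall m : nat, alpha m <= C * beta m) <->
  (exists r : nat, (0 < r)%N /\
     forall n : nat, (Ktil omega n alpha <= Ktil omega (n + r) beta)%N).
Proof.
move=> w01 ha hb a1 b1; split.
- move=> [C [C0 le_scaled]].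
  exact: (Ktil_shift_le_of_le_scaled w01 ha hb a1 b1 C0 le_scaled).
- move=> [r [_ Ktil_le]]; exists (omega ^+ r.+1)^-1; split.
    by rewrite invr_gt0 exprn_gt0 //; case/andP: w01.
  exact: (le_scaled_of_Ktil_shift_le w01 ha hb a1 b1 Ktil_le).
Qed.
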